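(* Let $(\mathcal{F},\mathcal{F}_d,R)$ be a justification frame, $x\in\mathcal{F}_d$, let $\mathbb{B}$ be a branch selection for $x$, and let $x\gets A$ be a rule in $R$. Then there exists $y^*\in A$ such that $\mathbb{B}_{y^*}:=\{y^*\to b \mid x\to y^*\to b\in\mathbb{B}\}$ is a branch selection for $y^*$.
   Context: A fact space is a set $\mathcal{F}$ containing $\mathcal{L}=\{\mathbf{t},\mathbf{f},\mathbf{u}\}$, equipped with an involution $\sim$ with $\sim\mathbf{t}=\mathbf{f}$, $\sim\mathbf{u}=\mathbf{u}$, $\sim x\ne x$ for $x\ne\mathbf{u}$. A justification frame is $(\mathcal{F},\mathcal{F}_d,R)$ with defined facts $\mathcal{F}_d\subseteq\mathcal{F}$, $\sim\mathcal{F}_d=\mathcal{F}_d$, $\mathcal{L}\cap\mathcal{F}_d=\emptyset$, and rules $R\subseteq\mathcal{F}_d\times2^{\mathcal{F}}$ written $x\gets A$, such that each $x\in\mathcal{F}_d$ has a rule with nonempty body and no rule with empty body; open facts $\mathcal{F}_o=\mathcal{F}\setminus\mathcal{F}_d$. A (tree-like) justification is a directed labeled forest whose internal nodes $n$ are labeled by defined facts with $\ell(n)\gets\{\ell(m): (n,m)\text{ an edge}\}\in R$; it is locally complete if no leaf is labeled by a defined fact; it is rooted in $x$ if a node labeled $x$ reaches all nodes. For an open fact $y$, the only locally complete justification rooted in $y$ is the single-node justification labeled $y$ (whose only branch is $y$). A branch is an infinite sequence of defined facts or a finite sequence of defined facts followed by an open fact. A $J$-branch starting in $x$ is a path in $J$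 from the root node labeled $x$ that is infinite or ends in a leaf. A branch selection for a fact $x$ is a set $\mathbb{B}$ of branches starting in $x$ such that for each locally complete justification $J$ rooted in $x$, $\mathbb{B}$ contains at least one $J$-branch starting in $x$. *)

From Stdlib Require Import List Relations.
Import ListNotations.
Set Implicit Arguments.

Record FactSpace := {
  fact :> Type;
  ftrue : fact;
  ffalse : fact;
  funkn : fact;
  neg : fact -> fact;
  ftrue_ffalse : ftrue <> ffalse;
  ftrue_funkn : ftrue <> funkn;
  ffalse_funkn : ffalse <> funkn;
  neg_invol : forall x, neg (neg x) = x;
  neg_true : neg ftrue = ffalse;
  neg_unkn : neg funkn = funkn;
  neg_ne : forall x, x <> funkn -> neg x <> x
}.

Definition logical (FS : FactSpace) (x : FS) : Prop :=
  x = ftrue FS \/ x = ffalse FS \/ x = funkn FS.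

Record JFrame (FS : FactSpace) := {
  defined : FS -> Prop;
  rule : FS -> (FS -> Prop) -> Prop;
  defined_neg : forall x, defined x -> defined (neg FS x);
  defined_not_logical : forall x, defined x -> ~ @logical FS x;
  rule_head_defined : forall x A, rule x A -> defined x;
  rule_nonempty_exists : forall x, defined x -> exists A, rule x A /\ exists y, A y;
  rule_no_empty : forall x A, rule x A -> exists y, A y
}.

Definition opened (FS : FactSpace) (JF : JFrame FS) (x : FS) : Prop :=
  ~ defined JF x.

Inductive fseq (F : Type) : Type :=
| FinSeq : list F -> fseq F
| InfSeq : (nat -> F) -> fseq F.
Arguments FinSeq {F}.
Arguments InfSeq {F}.

Definition is_branch (FS : FactSpace) (JF : JFrame FS) (b : fseq FS) : Prop :=
  match b with
  | FinSeq l => exists pre o, l = pre ++ [o] /\ Forall (defined JF) pre /\ opened JF o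
  | InfSeq s => forall i, defined JF (s i)
  end.

Definition starts_in (F : Type) (x : F) (b : fseq F) : Prop :=
  match b with
  | FinSeq l => exists l', l = x :: l'
  | InfSeq s => s 0 = x
  end.

Definition fcons (F : Type) (x : F) (b : fseq F) : fseq F :=
  match b with
  | FinSeq l => FinSeq (x :: l)
  | InfSeq s => InfSeq (fun i => match i with 0 => x | S k => s k end)
  end.

Record justification (FS : FactSpace) (JF : JFrame FS) := {
  node : Type;
  lab : node -> FS;
  edge : node -> node -> Prop;            (* edge n m : n is the parent of m *)
  edge_one_parent : forall n1 n2 m, edge n1 m -> edge n2 m -> n1 = n2;
  edge_acyclic : forall n, ~ clos_trans node edge n n;
  internal_rule : forall n, (exists m, edge n m) ->
     defined JF (lab n) /\
     exists A, rule JF (lab n) A /\ (forall y, A y <-> exists m, edge n m /\ lab m = y)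
}.

Definition is_leaf (FS : FactSpace) (JF : JFrame FS) (J : justification JF) (n : node J) : Prop :=
  forall m, ~ edge J n m.

Definition locally_complete (FS : FactSpace) (JF : JFrame FS) (J : justification JF) : Prop :=
  forall n, @is_leaf FS JF J n -> opened JF (lab J n).

Definition root_of (FS : FactSpace) (JF : JFrame FS) (J : justification JF) (x : FS) (r : node J) : Prop :=
  lab J r = x /\ forall m, clos_refl_trans (node J) (edge J) r m.

Definition rooted_in (FS : FactSpace) (JF : JFrame FS) (J : justification JF) (x : FS) : Prop :=
  exists r, @root_of FS JF J x r.

Fixpoint is_path (N : Type) (E : N -> N -> Prop) (n : N) (l : list N) : Prop :=
  match l with
  | [] => True
  | m :: l' => E n m /\ is_path E m l'
  end.

Definition J_branch (FS : FactSpace) (JF : JFrame FS) (J : justification JF) (x : FS) (b : fseq FS) : Prop :=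
  exists r, @root_of FS JF J x r /\
    ((exists rest, is_path (edge J) r rest /\ is_leaf J (last rest r) /\
                   b = FinSeq (map (lab J) (r :: rest)))
     \/
     (exists p : nat -> node J, p 0 = r /\ (forall i, edge J (p i) (p (S i))) /\
                   b = InfSeq (fun i => lab J (p i)))).

Definition branch_selection (FS : FactSpace) (JF : JFrame FS) (x : FS) (B : fseq FS -> Prop) : Prop :=
  (forall b, B b -> is_branch JF b /\ starts_in x b) /\
  (forall J : justification JF, locally_complete J -> rooted_in J x ->
     exists b, B b /\ J_branch J x b).

Definition sub_selection (F : Type) (x y : F) (B : fseq F -> Prop) : fseq F -> Prop :=
  fun b => starts_in y b /\ B (fcons x b).

From Stdlib Require Import List Relations Classical IndefiniteDescription FunctionalExtensionality Eqdep.
Import ListNotations.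
Set Implicit Arguments.

(* If no child y of the rule x <- A worked, then for every y in A there would
   be a locally complete justification J_y rooted in y none of whose branches
   lies in B_y.  Hanging all the J_y below a fresh root labelled x yields a
   locally complete justification rooted in x, so B contains one of its
   branches.  That branch is x -> b for a J_y-branch b of the child y it passes
   through, and then b lies in B_y: a contradiction. *)

Lemma last_cons (T : Type) (a d : T) (l : list T) : last (a :: l) d = last l a.
Proof.
  revert a d; induction l as [|b l IH]; intros a d; [reflexivity|].
  change (last (b :: l) d = last (b :: l) a); rewrite !IH; reflexivity.
Qed.

Lemma last_map (T U : Type) (f : T -> U) (l : list T) (d : T) :
  last (map f l) (f d) = f (last l d).
Proof.
  revert d; induction l as [|a l IH]; intros d; [reflexivity|].
  simpl map; rewrite !last_cons; apply IH.
Qed.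

Lemma dependent_functional_choice (I : Type) (T : I -> Type) (P : forall i, T i -> Prop) :
  (forall i, exists t, P i t) -> exists f : forall i, T i, forall i, P i (f i).
Proof.
  intros H.
  exists (fun i => proj1_sig (constructive_indefinite_description _ (H i))).
  intros i; exact (proj2_sig (constructive_indefinite_description _ (H i))).
Qed.

Lemma is_branch_fcons_inv (FS : FactSpace) (JF : JFrame FS) (x : FS) (b : fseq FS) :
  defined JF x -> is_branch JF (fcons x b) -> is_branch JF b.
Proof.
  intros Hx Hb; destruct b as [l|s]; simpl in *.
  - destruct Hb as ([|z pre] & o & E & Hpre & Ho); simpl in E; injection E as -> E.
    + contradiction.
    + subst l. inversion Hpre; eauto.
  - intros i; exact (Hb (S i)).
Qed.

Lemma J_branch_starts_in (FS : FactSpace) (JF : JFrame FS) (J : justification JF)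
  (x : FS) (b : fseq FS) :
  J_branch J x b -> starts_in x b.
Proof.
  intros (r & [Hr _] & [(rest & _ & _ & ->) | (p & Hp0 & _ & ->)]); simpl.
  - rewrite Hr; eauto.
  - rewrite Hp0; exact Hr.
Qed.

Lemma root_no_parent (FS : FactSpace) (JF : JFrame FS) (K : justification JF)
  (z : FS) (r k : node K) :
  root_of K z r -> ~ edge K k r.
Proof.
  intros [_ Hreach] E.
  apply (@edge_acyclic _ _ K r), clos_rt_t with k; [apply Hreach | apply t_step, E].
Qed.

Lemma not_branch_selection_counterexample (FS : FactSpace) (JF : JFrame FS) (y : FS)
  (B : fseq FS -> Prop) :
  (forall b, B b -> is_branch JF b /\ starts_in y b) -> ~ branch_selection JF y B ->
  exists J : justification JF,
    locally_complete J /\ rooted_in J y /\ forall b, J_branch J y b -> ~ B b.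
Proof.
  intros Hbranches Hnot.
  apply NNPP; intros Hno; apply Hnot; split; [exact Hbranches|].
  intros J HJ Hroot; apply NNPP; intros Hnone.
  apply Hno; exists J; repeat split; eauto.
Qed.

Section Graft.

Variables (FS : FactSpace) (JF : JFrame FS) (x : FS) (A : FS -> Prop).
Hypotheses (Hx : defined JF x) (HA : rule JF x A).
Variable J : forall y : {y | A y}, justification JF.
Hypothesis J_rooted : forall y, rooted_in (J y) (proj1_sig y).

Definition graft_node : Type := option {y : {y | A y} & node (J y)}.

Definition inner (y : {y | A y}) (n : node (J y)) : graft_node := Some (existT _ y n).

Definition graft_lab (c : graft_node) : FS :=
  match c with None => x | Some (existT _ y n) => lab (J y) n end.

Inductive graft_edge : graft_node -> graft_node -> Prop :=
| graft_edge_top y n : root_of (J y) (proj1_sig y) n -> graft_edge None (inner y n)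
| graft_edge_inner y n m : edge (J y) n m -> graft_edge (inner y n) (inner y m).

Lemma inner_inj y n m : inner y n = inner y m -> n = m.
Proof. intros E; injection E; apply inj_pair2. Qed.

Lemma graft_edge_from_top c :
  graft_edge None c -> exists y n, c = inner y n /\ root_of (J y) (proj1_sig y) n.
Proof. intros E; inversion E; eauto. Qed.

Lemma graft_edge_from_inner y n c :
  graft_edge (inner y n) c -> exists m, c = inner y m /\ edge (J y) n m.
Proof.
  intros E; inversion E; subst.
  match goal with Eyn : existT _ _ _ = existT _ _ _ |- _ => apply inj_pair2 in Eyn end.
  subst; eauto.
Qed.

Lemma graft_edge_to_top c : ~ graft_edge c None.
Proof. intros E; inversion E. Qed.

Lemma graft_rt_to_top c : clos_refl_trans _ graft_edge c None -> c = None.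
Proof.
  intros H; apply clos_rt_rtn1 in H; inversion H; [reflexivity|].
  exfalso; eapply graft_edge_to_top; eauto.
Qed.

Lemma graft_trans_from_inner y n c :
  clos_trans _ graft_edge (inner y n) c ->
  exists m, c = inner y m /\ clos_trans _ (edge (J y)) n m.
Proof.
  intros H; apply clos_trans_t1n in H.
  remember (inner y n) as c0 eqn:E; revert n E.
  induction H as [c0 c1 H01 | c0 c1 c2 H01 _ IH]; intros n ->;
    destruct (graft_edge_from_inner H01) as (m & -> & Hnm).
  - eauto using t_step.
  - destruct (IH m eq_refl) as (m' & -> & Hmm').
    eauto using t_trans, t_step.
Qed.

Lemma graft_rt_inner y n m :
  clos_refl_trans _ (edge (J y)) n m -> clos_refl_trans _ graft_edge (inner y n) (inner y m).
Proof.
  induction 1; eauto using rt_step, rt_refl, rt_trans, graft_edge_inner.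
Qed.

Lemma graft_one_parent c1 c2 d : graft_edge c1 d -> graft_edge c2 d -> c1 = c2.
Proof.
  intros E1 E2.
  destruct c1 as [[y1 k1]|], c2 as [[y2 k2]|]; try reflexivity.
  - destruct (graft_edge_from_inner E1) as (m1 & -> & Ek1).
    destruct (graft_edge_from_inner E2) as (m2 & Em & Ek2).
    injection Em as <- Em; apply inj_pair2 in Em; subst.
    rewrite (edge_one_parent _ _ _ _ Ek1 Ek2); reflexivity.
  - destruct (graft_edge_from_inner E1) as (m & -> & Ek).
    destruct (graft_edge_from_top E2) as (y & n & En & Hroot).
    injection En as <- En; apply inj_pair2 in En; subst.
    destruct (root_no_parent _ Hroot Ek).
  - destruct (graft_edge_from_inner E2) as (m & -> & Ek).
    destruct (graft_edge_from_top E1) as (y & n & En & Hroot).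
    injection En as <- En; apply inj_pair2 in En; subst.
    destruct (root_no_parent _ Hroot Ek).
Qed.

Lemma graft_acyclic c : ~ clos_trans _ graft_edge c c.
Proof.
  intros H; destruct c as [[y n]|].
  - destruct (graft_trans_from_inner H) as (m & Em & Hnm).
    apply inner_inj in Em; subst.
    exact (edge_acyclic _ Hnm).
  - apply clos_trans_tn1 in H; inversion H; eapply graft_edge_to_top; eauto.
Qed.

Lemma graft_internal_rule c : (exists d, graft_edge c d) ->
  defined JF (graft_lab c) /\
  exists A', rule JF (graft_lab c) A' /\
    (forall z, A' z <-> exists d, graft_edge c d /\ graft_lab d = z).
Proof.
  intros [d Ecd]; destruct c as [[y n]|].
  - destruct (graft_edge_from_inner Ecd) as (m & -> & Enm).
    destruct (internal_rule (J y) n (ex_intro _ m Enm)) as (Hdef & A' & HA' & Hchildren).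
    split; [exact Hdef|]; exists A'; split; [exact HA'|].
    intros z; rewrite Hchildren; split.
    + intros (k & Enk & <-); exists (inner y k); split; [constructor|]; auto.
    + intros (e & Ee & <-).
      destruct (graft_edge_from_inner Ee) as (k & -> & Enk); eauto.
  - split; [exact Hx|]; exists A; split; [exact HA|].
    intros z; split.
    + intros Az; destruct (J_rooted (exist _ z Az)) as [r Hr].
      exists (inner (exist _ z Az) r); split; [constructor; exact Hr|].
      exact (proj1 Hr).
    + intros (e & Ee & <-).
      destruct (graft_edge_from_top Ee) as (y & n & -> & [Hlab _]); simpl.
      rewrite Hlab; exact (proj2_sig y).
Qed.

Definition graft : justification JF :=
  {| node := graft_node; lab := graft_lab; edge := graft_edge;
     edge_one_parent := graft_one_parent; edge_acyclic := graft_acyclic;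
     internal_rule := graft_internal_rule |}.

Lemma graft_rooted : rooted_in graft x.
Proof.
  exists None; split; [reflexivity|].
  intros [[y n]|]; [|apply rt_refl].
  destruct (J_rooted y) as [r Hr].
  apply rt_trans with (inner y r); [apply rt_step; constructor; exact Hr|].
  apply graft_rt_inner, (proj2 Hr).
Qed.

Lemma graft_top_has_child : exists d, graft_edge None d.
Proof.
  destruct (rule_no_empty _ _ _ HA) as [z Az].
  destruct (J_rooted (exist _ z Az)) as [r Hr].
  exists (inner (exist _ z Az) r); constructor; exact Hr.
Qed.

Lemma graft_locally_complete : (forall y, locally_complete (J y)) -> locally_complete graft.
Proof.
  intros HJ [[y n]|] Hleaf.
  - apply (HJ y); intros m E.
    apply (Hleaf (inner y m)); constructor; exact E.
  - destruct graft_top_has_child as [d E]; destruct (Hleaf d E).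
Qed.

Lemma graft_path_inner y n l : is_path graft_edge (inner y n) l ->
  exists ns, l = map (inner y) ns /\ is_path (edge (J y)) n ns.
Proof.
  revert n; induction l as [|c l IH]; intros n Hpath.
  - exists []; split; [reflexivity | exact I].
  - destruct Hpath as [Ec Hpath].
    destruct (graft_edge_from_inner Ec) as (m & -> & Enm).
    destruct (IH m Hpath) as (ns & -> & Hns).
    exists (m :: ns); split; [reflexivity | split; assumption].
Qed.

Lemma graft_ray (ps : nat -> graft_node) :
  ps 0 = None -> (forall i, graft_edge (ps i) (ps (S i))) ->
  exists y (g : nat -> node (J y)), root_of (J y) (proj1_sig y) (g 0) /\
    (forall i, edge (J y) (g i) (g (S i))) /\ (forall i, ps (S i) = inner y (g i)).
Proof.
  intros Hps0 Hps.
  assert (E0 := Hps 0); rewrite Hps0 in E0.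
  destruct (graft_edge_from_top E0) as (y & n & Hps1 & Hroot).
  assert (Hin : forall i, exists m, ps (S i) = inner y m).
  { induction i as [|i [m Hm]]; [eauto|].
    assert (E := Hps (S i)); rewrite Hm in E.
    destruct (graft_edge_from_inner E) as (k & Hk & _); eauto. }
  destruct (functional_choice _ Hin) as [g Hg].
  exists y, g; split; [|split; [|exact Hg]].
  - rewrite <- (inner_inj (eq_trans (eq_sym (Hg 0)) Hps1)) in Hroot; exact Hroot.
  - intros i; assert (E := Hps (S i)); rewrite (Hg i), (Hg (S i)) in E.
    destruct (graft_edge_from_inner E) as (k & Hk & Ek).
    rewrite (inner_inj Hk); exact Ek.
Qed.

Lemma graft_J_branch_inv (b : fseq FS) : J_branch graft x b ->
  exists y b', b = fcons x b' /\ J_branch (J y) (proj1_sig y) b'.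
Proof.
  intros (r & [_ Hreach] & Hb).
  rewrite (graft_rt_to_top (Hreach None)) in Hb.
  destruct Hb as [([|c rest] & Hpath & Hleaf & ->) | (ps & Hps0 & Hps & ->)].
  - destruct graft_top_has_child as [d E]; destruct (Hleaf d E).
  - destruct Hpath as [Ec Hpath].
    destruct (graft_edge_from_top Ec) as (y & n & -> & Hroot).
    destruct (graft_path_inner y n rest Hpath) as (ns & -> & Hns).
    exists y, (FinSeq (map (lab (J y)) (n :: ns))); split.
    + simpl; rewrite map_map; reflexivity.
    + exists n; split; [exact Hroot|]; left; exists ns; split; [exact Hns|]; split; [|reflexivity].
      intros m E; apply (Hleaf (inner y m)).
      rewrite last_cons, (last_map (inner y)); constructor; exact E.
  - destruct (graft_ray ps Hps0 Hps) as (y & g & Hroot & Hg & Hps').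
    exists y, (InfSeq (fun i => lab (J y) (g i))); split.
    + simpl; f_equal; apply functional_extensionality; intros [|i].
      * rewrite Hps0; reflexivity.
      * rewrite Hps'; reflexivity.
    + exists (g 0); split; [exact Hroot|]; right; exists g; auto.
Qed.

End Graft.

Theorem mainTheorem3 (FS : FactSpace) (JF : JFrame FS) (x : FS)
  (Hx : defined JF x) (B : fseq FS -> Prop)
  (HB : branch_selection JF x B) (A : FS -> Prop) (HA : rule JF x A) :
  exists ystar, A ystar /\ branch_selection JF ystar (sub_selection x ystar B).
Proof.
  apply NNPP; intros Hnone.
  assert (Hbad : forall y : {y | A y}, exists J : justification JF,
    locally_complete J /\ rooted_in J (proj1_sig y) /\
    forall b, J_branch J (proj1_sig y) b -> ~ sub_selection x (proj1_sig y) B b).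
  { intros [y Ay]; apply not_branch_selection_counterexample.
    - intros b [Hy Hb]; split; [|exact Hy].
      apply (is_branch_fcons_inv _ _ _ Hx), HB, Hb.
    - intros Hsel; apply Hnone; eauto. }
  destruct (dependent_functional_choice _ _ Hbad) as [J HJ].
  assert (Hrooted : forall y, rooted_in (J y) (proj1_sig y)) by apply HJ.
  destruct (proj2 HB (graft x A Hx HA J Hrooted)) as (b & Hb & HJb).
  - apply graft_locally_complete; apply HJ.
  - apply graft_rooted.
  - destruct (graft_J_branch_inv HJb) as (y & b' & -> & HJb').
    apply (proj2 (proj2 (HJ y)) b' HJb').
    split; [exact (J_branch_starts_in HJb') | exact Hb].
Qed.
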